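(* Let $k>0$, $\delta(t)=\tfrac12e^{-t}+\tfrac12e^{-2t}$, $g_2\equiv0$ and $g_1(a)=-\frac14a^4+ka^3-k^2a^2-\frac34a-1$. Then in the continuous-time two-state model, $Q^*\sim(0,0)$ is a weak equilibrium but not a strong equilibrium. Moreover, for every sufficiently small $h>0$, the transition matrix $u^*\sim(0,0)$ (the identity matrix) is an equilibrium of the discrete-time problem $V^h(i,u)=\mathbb E_{i,u}[\sum_{n=0}^\infty\kappa^h(n,Y_n,u_{Y_n})]$ over all $2\times2$ transition matrices, where $\kappa^h(n,1,u_1)=\delta(nh)g_1(\alpha/h)h$ and $\kappa^h(n,2,u_2)=\delta(nh)g_2(\beta/h)h\equiv0$ for $u\sim(\alpha,\beta)$; consequently the associated generators $(u^*-I)/h\sim(0,0)$ converge to the weak but not strong equilibrium $Q^*$.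
   Context: Two-state continuous-time model: $S=\{1,2\}$, admissible rows unrestricted, so every generator has the form $Q=\begin{pmatrix}-a&a\\ b&-b\end{pmatrix}$, $a,b\ge0$, written $Q\sim(a,b)$; payoff $f(t,1,(-a,a))=\delta(t)g_1(a)$, $f(t,2,(b,-b))=\delta(t)g_2(b)$; $F(i,Q)=\mathbb E_{i,Q}[\int_0^\infty f(t,X_t,Q_{X_t})dt]$ for the chain $X$ with generator $Q$; $Q\otimes_\varepsilon Q'$ uses $Q$ on $[0,\varepsilon]$ and $Q'$ afterwards. $Q^*$ is a weak equilibrium if $\liminf_{\varepsilon\downarrow0}\varepsilon^{-1}(F(i,Q^* )-F(i,Q\otimes_\varepsilon Q^* ))\ge0$ for all $Q,i$; a strong equilibrium if for every $i,Q$ there is $\varepsilon>0$ with $F(i,Q^* )\ge F(i,Q\otimes_{\varepsilon'}Q^* )$ for all $0<\varepsilon'\le\varepsilon$. Discrete time: a transition matrix $u=\begin{pmatrix}1-\alpha&\alpha\\ \beta&1-\beta\end{pmatrix}$, $\alpha,\beta\in[0,1]$, is written $u\sim(\alpha,\beta)$; $Y$ is the discrete-time chain with transition matrix $u$; $u\otimes_1u^*$ uses $u$ at time $0$ and $u^*$ afterwards; $u^*$ is an equilibrium of $V^h$ if $V^h(i,u^* )\ge V^h(i,u\otimes_1u^* )$ for all $i\in S$ and all transition matrices $u$. *)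

From Stdlib Require Import Reals Lra ClassicalEpsilon.
Open Scope R_scope.

Inductive state := S1 | S2.

(** A 2x2 generator Q = [[-a, a],[b, -b]] is encoded by (a,b): Q ~ (a,b).
    The same record encodes a transition matrix u = [[1-al, al],[be, 1-be]],
    u ~ (al, be). *)
Record gen := mkGen { ga : R; gb : R }.

Definition admissible_gen (Q : gen) : Prop := 0 <= ga Q /\ 0 <= gb Q.
Definition stochastic (u : gen) : Prop :=
  0 <= ga u <= 1 /\ 0 <= gb u <= 1.

(** P(X_0 = 1) for the chain started at i. *)
Definition init1 (i : state) : R := match i with S1 => 1 | S2 => 0 end.

(** P(X_t = 1) for the homogeneous chain with generator Q ~ (a,b) and
    P(X_0 = 1) = p0, i.e. the first component of p(0) exp(tQ):
    p(t) = b/(a+b) + (p0 - b/(a+b)) e^{-(a+b)t}  (and p(t) = p0 if a+b = 0). *)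
Definition prob1 (Q : gen) (p0 t : R) : R :=
  let s := ga Q + gb Q in
  if Req_dec_T s 0 then p0 else gb Q / s + (p0 - gb Q / s) * exp (- s * t).

Definition gen_concat (Q : gen) (eps : R) (Q' : gen) (t : R) : gen :=
  if Rle_dec t eps then Q else Q'.

Definition prob1_concat (Q : gen) (eps : R) (Q' : gen) (p0 t : R) : R :=
  if Rle_dec t eps then prob1 Q p0 t else prob1 Q' (prob1 Q p0 eps) (t - eps).

(** E[f(t, X_t, Q_{X_t})] with f(t,1,(-a,a)) = delta t * g1 a,
    f(t,2,(b,-b)) = delta t * g2 b, for a time-dependent generator Qt and
    p t = P(X_t = 1). *)
Definition exp_payoff (delta g1 g2 : R -> R) (Qt : R -> gen) (p : R -> R)
  (t : R) : R :=
  delta t * (p t * g1 (ga (Qt t)) + (1 - p t) * g2 (gb (Qt t))).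

Definition improper_int_is (f : R -> R) (a l : R) : Prop :=
  (forall b, a <= b -> inhabited (Riemann_integrable f a b)) /\
  forall eps, 0 < eps -> exists B, forall b (pr : Riemann_integrable f a b),
      B <= b -> Rabs (RiemannInt pr - l) < eps.

Definition improper_int (f : R -> R) (a : R) : R :=
  epsilon (inhabits 0) (fun l => improper_int_is f a l).

Definition Fc (delta g1 g2 : R -> R) (i : state) (Q : gen) : R :=
  improper_int (exp_payoff delta g1 g2 (fun _ => Q)
                  (fun t => prob1 Q (init1 i) t)) 0.

Definition Fc_concat (delta g1 g2 : R -> R) (i : state) (Q : gen) (eps : R)
  (Q' : gen) : R :=
  improper_int (exp_payoff delta g1 g2 (gen_concat Q eps Q')
                  (prob1_concat Q eps Q' (init1 i))) 0.

(** Weak equilibrium: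
    liminf_{eps -> 0+} (F(i,Qs) - F(i, Q (x)_eps Qs)) / eps >= 0
    for all admissible Q and all i. *)
Definition weak_equilibrium (delta g1 g2 : R -> R) (Qs : gen) : Prop :=
  admissible_gen Qs /\
  forall (Q : gen) (i : state), admissible_gen Q ->
    forall eta, 0 < eta -> exists d, 0 < d /\
      forall eps, 0 < eps < d ->
        - eta <= (Fc delta g1 g2 i Qs - Fc_concat delta g1 g2 i Q eps Qs) / eps.

Definition strong_equilibrium (delta g1 g2 : R -> R) (Qs : gen) : Prop :=
  admissible_gen Qs /\
  forall (Q : gen) (i : state), admissible_gen Q ->
    exists eps, 0 < eps /\
      forall eps', 0 < eps' <= eps ->
        Fc delta g1 g2 i Qs >= Fc_concat delta g1 g2 i Q eps' Qs.

(** Discrete time.  A (possibly time-dependent) policy is a sequence of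
    transition matrices pol n ~ (alpha_n, beta_n); P(Y_n = 1): *)
Fixpoint dprob1 (pol : nat -> gen) (p0 : R) (n : nat) : R :=
  match n with
  | O => p0
  | S m => let p := dprob1 pol p0 m in
           p * (1 - ga (pol m)) + (1 - p) * gb (pol m)
  end.

Definition kappa1 (delta g1 : R -> R) (h : R) (n : nat) (u : gen) : R :=
  delta (INR n * h) * g1 (ga u / h) * h.
Definition kappa2 (delta g2 : R -> R) (h : R) (n : nat) (u : gen) : R :=
  delta (INR n * h) * g2 (gb u / h) * h.

Definition dterm (delta g1 g2 : R -> R) (h : R) (pol : nat -> gen) (i : state)
  (n : nat) : R :=
  let p := dprob1 pol (init1 i) n in
  p * kappa1 delta g1 h n (pol n) + (1 - p) * kappa2 delta g2 h n (pol n).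

Definition Vh (delta g1 g2 : R -> R) (h : R) (i : state) (pol : nat -> gen) : R :=
  epsilon (inhabits 0) (fun l => infinite_sum (dterm delta g1 g2 h pol i) l).

Definition pol_concat1 (u u' : gen) (n : nat) : gen :=
  match n with O => u | S _ => u' end.

Definition disc_equilibrium (delta g1 g2 : R -> R) (h : R) (us : gen) : Prop :=
  stochastic us /\
  forall (u : gen) (i : state), stochastic u ->
    Vh delta g1 g2 h i (fun _ => us) >= Vh delta g1 g2 h i (pol_concat1 u us).

From Stdlib Require Import Reals Lra ClassicalEpsilon.
From Coquelicot Require Import Coquelicot.
Open Scope R_scope.

(* Under Q0 ~ (0,0) the chain never moves and F(i, Q0) = - 1_{i = 1} D(0), where
   D(t) = int_t^oo delta.  For a deviation Q ~ (a,b) on [0, eps], the gain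
   F(i, Q0) - F(i, Q (x)_eps Q0) vanishes at eps = 0 and has eps-derivative
     p(eps) (-(g1(a) + 1) delta(eps) - a D(eps)) + b (1 - p(eps)) D(eps),
   p(eps) being the probability of state 1.  The identity
   g1(a) + 1 + 3a/4 = - (a^2/2 - k a)^2 bounds the first bracket below by
   a (3/4 delta - D)(eps) = a (e^{-2 eps} - e^{-eps}) / 8 = O(eps), so the gain is
   at least - O(eps^2): Q0 is a weak equilibrium.  At a = 2k the square vanishes
   and the bracket is negative for every eps > 0, so deviating to (2k, 0) from
   state 1 strictly pays on every interval: Q0 is not strong.  In discrete time
   the same identity together with h * sum_{n >= 1} delta(n h) <= 3/4 shows that
   no one-step deviation from the identity matrix pays, for every h > 0. *)

Definition delta (t : R) : R := / 2 * exp (- t) + / 2 * exp (- (2 * t)).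
Definition delta_tail (t : R) : R := / 2 * exp (- t) + / 4 * exp (- (2 * t)).
Definition g1 (k a : R) : R := - / 4 * a ^ 4 + k * a ^ 3 - k ^ 2 * a ^ 2 - 3 / 4 * a - 1.
Definition g2 (_ : R) : R := 0.

Lemma g1_sos k a : g1 k a + 1 + 3 / 4 * a = - (a ^ 2 / 2 - k * a) ^ 2.
Proof. unfold g1. field. Qed.

Lemma g1_le k a : g1 k a + 1 + 3 / 4 * a <= 0.
Proof. rewrite g1_sos. pose proof (pow2_ge_0 (a ^ 2 / 2 - k * a)). lra. Qed.

Lemma g1_2k k : g1 k (2 * k) + 1 + 3 / 4 * (2 * k) = 0.
Proof. rewrite g1_sos. field. Qed.

Lemma g1_0 k : g1 k 0 = -1.
Proof. unfold g1. ring. Qed.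

(** * The discount function and its tail *)

Lemma exp_le_one x : x <= 0 -> exp x <= 1.
Proof.
  intros Hx. destruct (Rle_lt_or_eq_dec x 0 Hx) as [Hlt | ->].
  - rewrite <- exp_0. left. apply exp_increasing, Hlt.
  - rewrite exp_0. apply Rle_refl.
Qed.

Lemma exp_opp_lt_one y : 0 < y -> exp (- y) < 1.
Proof. intros Hy. rewrite <- exp_0. apply exp_increasing. lra. Qed.

Lemma delta_0 : delta 0 = 1.
Proof. unfold delta. rewrite Rmult_0_r, Ropp_0, exp_0. field. Qed.

Lemma delta_nonneg t : 0 <= delta t.
Proof. unfold delta. pose proof (exp_pos (- t)). pose proof (exp_pos (- (2 * t))). lra. Qed.

Lemma delta_tail_nonneg t : 0 <= delta_tail t.
Proof. unfold delta_tail. pose proof (exp_pos (- t)). pose proof (exp_pos (- (2 * t))). lra. Qed.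

Lemma three_quarters_delta_sub_tail t :
  3 / 4 * delta t - delta_tail t = (exp (- (2 * t)) - exp (- t)) / 8.
Proof. unfold delta, delta_tail. field. Qed.

Lemma exp_gap_bounds t : 0 < t -> - (2 * t) <= exp (- (2 * t)) - exp (- t) < 0.
Proof.
  intros Ht. pose proof (exp_ineq1_le (- (2 * t))). pose proof (exp_opp_lt_one t Ht).
  assert (exp (- (2 * t)) < exp (- t)) by (apply exp_increasing; lra).
  lra.
Qed.

Lemma is_derive_delta_tail t : is_derive delta_tail t (- delta t).
Proof. unfold delta_tail, delta. auto_derive; [exact I | field]. Qed.

Lemma is_RInt_delta a b : is_RInt delta a b (delta_tail a - delta_tail b).
Proof.
  replace (delta_tail a - delta_tail b) with (minus (- delta_tail b) (- delta_tail a))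
    by (unfold minus, plus, opp; simpl; ring).
  apply (is_RInt_derive (fun t => - delta_tail t)).
  - intros t _. unfold delta_tail, delta. auto_derive; [exact I | field].
  - intros t _. apply (ex_derive_continuous delta). unfold delta. auto_derive. exact I.
Qed.

Lemma is_RInt_scal_delta c a b :
  is_RInt (fun t => c * delta t) a b (c * (delta_tail a - delta_tail b)).
Proof. exact (is_RInt_scal delta a b c _ (is_RInt_delta a b)). Qed.

Lemma is_lim_exp_opp : is_lim (fun t => exp (- t)) p_infty 0.
Proof.
  apply (is_lim_comp exp Ropp p_infty 0 m_infty).
  - exact is_lim_exp_m.
  - exact (is_lim_opp (fun t => t) p_infty p_infty (is_lim_id p_infty)).
  - exists 0. intros t _. discriminate.
Qed.

Lemma is_lim_delta_tail : is_lim delta_tail p_infty 0.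
Proof.
  set (q x := / 2 * x + / 4 * (x * x)).
  apply (is_lim_ext (fun t => q (exp (- t)))).
  { intros t. unfold q, delta_tail. rewrite <- exp_plus.
    replace (- t + - t) with (- (2 * t)) by ring. reflexivity. }
  replace 0 with (q 0) by (unfold q; ring).
  apply is_lim_comp_continuous; [exact is_lim_exp_opp |].
  apply (ex_derive_continuous q). unfold q. auto_derive. exact I.
Qed.

Lemma is_lim_scal_delta_tail c : is_lim (fun t => c * delta_tail t) p_infty 0.
Proof.
  replace (Finite 0) with (Rbar_mult c 0) by (simpl; f_equal; ring).
  apply is_lim_scal_l, is_lim_delta_tail.
Qed.

(** * Improper integrals *)

Lemma improper_int_is_unique f a l1 l2 :
  improper_int_is f a l1 -> improper_int_is f a l2 -> l1 = l2.
Proof.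
  intros [Hint H1] [_ H2]. apply cond_eq. intros e He.
  destruct (H1 (e / 2) ltac:(lra)) as [B1 HB1], (H2 (e / 2) ltac:(lra)) as [B2 HB2].
  pose proof (Rmax_l a (Rmax B1 B2)). pose proof (Rmax_r a (Rmax B1 B2)).
  pose proof (Rmax_l B1 B2). pose proof (Rmax_r B1 B2).
  set (b := Rmax a (Rmax B1 B2)) in *.
  destruct (Hint b ltac:(lra)) as [pr].
  specialize (HB1 b pr ltac:(lra)). specialize (HB2 b pr ltac:(lra)).
  replace (l1 - l2) with ((RiemannInt pr - l2) + - (RiemannInt pr - l1)) by ring.
  eapply Rle_lt_trans; [apply Rabs_triang |]. rewrite Rabs_Ropp. lra.
Qed.

Lemma improper_int_eq f a l : improper_int_is f a l -> improper_int f a = l.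
Proof.
  intros Hl. apply (improper_int_is_unique f a); [| exact Hl].
  exact (epsilon_spec (inhabits 0) (fun l => improper_int_is f a l) (ex_intro _ l Hl)).
Qed.

Lemma improper_int_is_of_RInt f a l r B :
  (forall b, a <= b -> ex_RInt f a b) ->
  (forall b, B <= b -> RInt f a b = l + r b :> R) ->
  is_lim r p_infty 0 -> improper_int_is f a l.
Proof.
  intros Hex Hint Hr. split.
  - intros b Hb. constructor. exact (ex_RInt_Reals_0 f a b (Hex b Hb)).
  - intros e He. apply is_lim_spec in Hr. destruct (Hr (mkposreal e He)) as [M HM].
    exists (Rmax B (M + 1)). intros b pr Hb.
    pose proof (Rmax_l B (M + 1)). pose proof (Rmax_r B (M + 1)).
    rewrite <- RInt_Reals, Hint by lra.
    replace (l + r b - l) with (r b - 0) by ring. apply HM. lra.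
Qed.

Lemma is_RInt_continuous (f : R -> R) a b :
  (forall t, continuous f t) -> is_RInt f a b (RInt f a b).
Proof.
  intros Hf. apply (RInt_correct (V := R_CompleteNormedModule)).
  apply ex_RInt_continuous. intros t _. apply Hf.
Qed.

Lemma is_derive_RInt_upper (f : R -> R) a x :
  (forall t, continuous f t) -> is_derive (fun y => RInt f a y) x (f x).
Proof.
  intros Hf. apply (is_derive_RInt f _ a); [| apply Hf].
  exists (mkposreal 1 Rlt_0_1). intros y _. apply is_RInt_continuous, Hf.
Qed.

(** * The two-state chain *)

Definition stationary (a b : R) : R := if Req_dec_T (a + b) 0 then 0 else b / (a + b).

Definition chain_prob (a b p0 t : R) : R :=
  stationary a b + (p0 - stationary a b) * exp (- (a + b) * t).

Lemma prob1_chain_prob Q p0 t : prob1 Q p0 t = chain_prob (ga Q) (gb Q) p0 t.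
Proof.
  unfold prob1, chain_prob, stationary. cbv zeta.
  destruct (Req_dec_T (ga Q + gb Q) 0) as [Hs | _]; [| reflexivity].
  rewrite Hs, Ropp_0, Rmult_0_l, exp_0. ring.
Qed.

Lemma prob1_identity p0 t : prob1 (mkGen 0 0) p0 t = p0.
Proof.
  rewrite prob1_chain_prob. unfold chain_prob. cbn [ga gb].
  rewrite Rplus_0_r, Ropp_0, Rmult_0_l, exp_0. ring.
Qed.

Lemma init1_range i : 0 <= init1 i <= 1.
Proof. destruct i; simpl; lra. Qed.

Lemma stationary_balance a b : 0 <= a -> 0 <= b -> (a + b) * stationary a b = b.
Proof.
  intros Ha Hb. unfold stationary.
  destruct (Req_dec_T (a + b) 0); [lra | field; assumption].
Qed.

Lemma stationary_range a b : 0 <= a -> 0 <= b -> 0 <= stationary a b <= 1.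
Proof.
  intros Ha Hb. pose proof (stationary_balance a b Ha Hb) as Hbal. unfold stationary in *.
  destruct (Req_dec_T (a + b) 0); [lra | nra].
Qed.

Lemma chain_prob_range a b p0 t : 0 <= a -> 0 <= b -> 0 <= p0 <= 1 -> 0 <= t ->
  0 <= chain_prob a b p0 t <= 1.
Proof.
  intros Ha Hb Hp Ht. pose proof (stationary_range a b Ha Hb).
  pose proof (exp_pos (- (a + b) * t)).
  assert (exp (- (a + b) * t) <= 1) by (apply exp_le_one; nra).
  unfold chain_prob. nra.
Qed.

Lemma chain_prob_pos a b t : 0 <= a -> 0 <= b -> 0 < chain_prob a b 1 t.
Proof.
  intros Ha Hb. pose proof (stationary_range a b Ha Hb).
  pose proof (exp_pos (- (a + b) * t)).
  unfold chain_prob. nra.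
Qed.

Lemma is_derive_chain_prob a b p0 t : 0 <= a -> 0 <= b ->
  is_derive (chain_prob a b p0) t (b - (a + b) * chain_prob a b p0 t).
Proof.
  intros Ha Hb.
  replace (b - (a + b) * chain_prob a b p0 t)
    with (- (a + b) * (p0 - stationary a b) * exp (- (a + b) * t))
    by (pose proof (stationary_balance a b Ha Hb); unfold chain_prob; nra).
  unfold chain_prob. auto_derive; [exact I | ring].
Qed.

Lemma continuous_delta_chain_prob a b p0 t :
  continuous (fun s => delta s * chain_prob a b p0 s) t.
Proof.
  apply (ex_derive_continuous (fun s => delta s * chain_prob a b p0 s)).
  unfold delta, chain_prob. auto_derive. exact I.
Qed.

(** * Continuous time *)

Lemma Fc_identity k i : Fc delta (g1 k) g2 i (mkGen 0 0) = - init1 i * delta_tail 0.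
Proof.
  unfold Fc. apply improper_int_eq.
  set (f := exp_payoff delta (g1 k) g2 (fun _ => mkGen 0 0)
              (fun t => prob1 (mkGen 0 0) (init1 i) t)).
  assert (Hf : forall t, f t = - init1 i * delta t).
  { intros t. unfold f, exp_payoff. rewrite prob1_identity. cbn [ga gb].
    rewrite g1_0. unfold g2. ring. }
  assert (Hint : forall b, is_RInt f 0 b (- init1 i * (delta_tail 0 - delta_tail b))).
  { intros b. apply (is_RInt_ext (fun t => - init1 i * delta t)).
    - intros t _. symmetry. apply Hf.
    - apply is_RInt_scal_delta. }
  apply (improper_int_is_of_RInt f 0 _ (fun b => init1 i * delta_tail b) 0).
  - intros b _. eexists. apply Hint.
  - intros b _. rewrite (is_RInt_unique f 0 b _ (Hint b)). ring.
  - apply is_lim_scal_delta_tail.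
Qed.

Lemma Fc_concat_identity k i Q eps : 0 < eps ->
  Fc_concat delta (g1 k) g2 i Q eps (mkGen 0 0) =
  g1 k (ga Q) * RInt (fun t => delta t * chain_prob (ga Q) (gb Q) (init1 i) t) 0 eps
  - chain_prob (ga Q) (gb Q) (init1 i) eps * delta_tail eps.
Proof.
  intros He. unfold Fc_concat. apply improper_int_eq.
  set (w := fun t => delta t * chain_prob (ga Q) (gb Q) (init1 i) t).
  set (P := chain_prob (ga Q) (gb Q) (init1 i) eps).
  set (f := exp_payoff delta (g1 k) g2 (gen_concat Q eps (mkGen 0 0))
              (prob1_concat Q eps (mkGen 0 0) (init1 i))).
  assert (Hf_head : forall t, t <= eps -> f t = g1 k (ga Q) * w t).
  { intros t Ht. unfold f, w, exp_payoff, gen_concat, prob1_concat.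
    destruct (Rle_dec t eps); [| lra].
    rewrite prob1_chain_prob. unfold g2. ring. }
  assert (Hf_tail : forall t, eps < t -> f t = - P * delta t).
  { intros t Ht. unfold f, exp_payoff, gen_concat, prob1_concat.
    destruct (Rle_dec t eps); [lra |].
    rewrite prob1_identity, prob1_chain_prob. cbn [ga gb]. rewrite g1_0. unfold g2.
    fold P. ring. }
  assert (Hhead : forall x, 0 <= x <= eps -> is_RInt f 0 x (g1 k (ga Q) * RInt w 0 x)).
  { intros x Hx. apply (is_RInt_ext (fun t => g1 k (ga Q) * w t)).
    - intros t Ht. rewrite Rmax_right in Ht by lra. symmetry. apply Hf_head. lra.
    - apply (is_RInt_scal w), is_RInt_continuous, continuous_delta_chain_prob. }
  assert (Htail : forall x, eps <= x ->
    is_RInt f eps x (- P * (delta_tail eps - delta_tail x))).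
  { intros x Hx. apply (is_RInt_ext (fun t => - P * delta t)).
    - intros t Ht. rewrite Rmin_left in Ht by lra. symmetry. apply Hf_tail. lra.
    - apply is_RInt_scal_delta. }
  assert (Hall : forall x, eps <= x ->
    is_RInt f 0 x (g1 k (ga Q) * RInt w 0 eps + - P * (delta_tail eps - delta_tail x))).
  { intros x Hx. apply (is_RInt_Chasles f 0 eps x); [apply Hhead; lra | apply Htail, Hx]. }
  apply (improper_int_is_of_RInt f 0 _ (fun x => P * delta_tail x) eps).
  - intros x Hx. destruct (Rle_dec x eps); eexists; [apply Hhead | apply Hall]; lra.
  - intros x Hx. rewrite (is_RInt_unique f 0 x _ (Hall x Hx)). ring.
  - apply is_lim_scal_delta_tail.
Qed.

Definition gain (k a b p0 eps : R) : R :=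
  - p0 * delta_tail 0
  - (g1 k a * RInt (fun t => delta t * chain_prob a b p0 t) 0 eps
     - chain_prob a b p0 eps * delta_tail eps).

Definition gain_rate (k a b p0 t : R) : R :=
  chain_prob a b p0 t * (- (g1 k a + 1) * delta t - a * delta_tail t)
  + b * (1 - chain_prob a b p0 t) * delta_tail t.

Lemma Fc_gain k i Q eps : 0 < eps ->
  Fc delta (g1 k) g2 i (mkGen 0 0) - Fc_concat delta (g1 k) g2 i Q eps (mkGen 0 0)
  = gain k (ga Q) (gb Q) (init1 i) eps.
Proof. intros He. rewrite Fc_identity, Fc_concat_identity by exact He. reflexivity. Qed.

Lemma gain_0 k a b p0 : gain k a b p0 0 = 0.
Proof.
  unfold gain, chain_prob. rewrite RInt_point.
  change (@zero R_CompleteNormedModule) with 0. rewrite !Rmult_0_r, exp_0. ring.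
Qed.

Lemma is_derive_gain k a b p0 t : 0 <= a -> 0 <= b ->
  is_derive (gain k a b p0) t (gain_rate k a b p0 t).
Proof.
  intros Ha Hb.
  set (w := fun s => delta s * chain_prob a b p0 s).
  set (p := chain_prob a b p0).
  set (dg := minus zero (minus (g1 k a * w t)
               (plus (mult (b - (a + b) * p t) (delta_tail t)) (mult (p t) (- delta t))))).
  assert (Hdg : is_derive (fun s => minus (- p0 * delta_tail 0)
                  (minus (g1 k a * RInt w 0 s) (mult (p s) (delta_tail s)))) t dg).
  { apply (is_derive_minus (V := R_NormedModule)).
    { exact (is_derive_const (K := R_AbsRing) (V := R_NormedModule) _ t). }
    apply (is_derive_minus (V := R_NormedModule)).
    - apply is_derive_scal, is_derive_RInt_upper, continuous_delta_chain_prob.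
    - apply (is_derive_mult (K := R_AbsRing));
        [apply is_derive_chain_prob; assumption | apply is_derive_delta_tail |].
      intros; apply Rmult_comm. }
  replace (gain_rate k a b p0 t) with dg
    by (unfold dg, gain_rate, minus, plus, opp, zero, w, p; simpl; unfold mult; simpl; ring).
  exact Hdg.
Qed.

Lemma gain_mvt k a b p0 eps : 0 <= a -> 0 <= b -> 0 < eps ->
  exists c, 0 < c < eps /\ gain k a b p0 eps = gain_rate k a b p0 c * eps.
Proof.
  intros Ha Hb He.
  destruct (MVT_cor2 (gain k a b p0) (gain_rate k a b p0) 0 eps He) as [c [Hc Hrange]].
  { intros c _. apply is_derive_Reals, is_derive_gain; assumption. }
  exists c. split; [exact Hrange |]. rewrite gain_0 in Hc. lra.
Qed.

Lemma gain_rate_lower k a b p0 t : 0 <= a -> 0 <= b -> 0 <= p0 <= 1 -> 0 < t ->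
  - (a * t / 4) <= gain_rate k a b p0 t.
Proof.
  intros Ha Hb Hp Ht. unfold gain_rate.
  pose proof (chain_prob_range a b p0 t Ha Hb Hp (Rlt_le _ _ Ht)) as Hrange.
  set (p := chain_prob a b p0 t) in *.
  assert (Hlead : - (a * t / 4) <= - (g1 k a + 1) * delta t - a * delta_tail t).
  { pose proof (g1_le k a). pose proof (exp_gap_bounds t Ht). pose proof (delta_nonneg t).
    assert (a * (3 / 4 * delta t - delta_tail t) = a * ((exp (- (2 * t)) - exp (- t)) / 8))
      by (rewrite three_quarters_delta_sub_tail; reflexivity).
    assert (0 <= (- (g1 k a + 1) - 3 / 4 * a) * delta t) by (apply Rmult_le_pos; lra).
    assert (a * (- (2 * t)) <= a * (exp (- (2 * t)) - exp (- t)))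
      by (apply Rmult_le_compat_l; lra).
    lra. }
  assert (0 <= b * (1 - p) * delta_tail t)
    by (apply Rmult_le_pos; [apply Rmult_le_pos | apply delta_tail_nonneg]; lra).
  assert (0 <= a * t) by (apply Rmult_le_pos; lra).
  nra.
Qed.

Lemma gain_rate_neg k t : 0 < k -> 0 < t -> gain_rate k (2 * k) 0 1 t < 0.
Proof.
  intros Hk Ht. unfold gain_rate.
  pose proof (chain_prob_pos (2 * k) 0 t ltac:(lra) ltac:(lra)).
  pose proof (exp_gap_bounds t Ht).
  assert (Hlead : - (g1 k (2 * k) + 1) * delta t - 2 * k * delta_tail t
                  = 2 * k * ((exp (- (2 * t)) - exp (- t)) / 8)).
  { replace (- (g1 k (2 * k) + 1)) with (3 / 4 * (2 * k)) by (pose proof (g1_2k k); lra).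
    rewrite <- three_quarters_delta_sub_tail. ring. }
  assert (2 * k * ((exp (- (2 * t)) - exp (- t)) / 8) < 0) by nra.
  rewrite Hlead. nra.
Qed.

Lemma weak_equilibrium_identity k : weak_equilibrium delta (g1 k) g2 (mkGen 0 0).
Proof.
  split; [unfold admissible_gen; simpl; lra |].
  intros Q i [Ha Hb] eta Heta.
  exists (4 * eta / (ga Q + 1)). split; [apply Rdiv_lt_0_compat; lra |].
  intros eps [He Hsmall].
  rewrite Fc_gain by exact He.
  destruct (gain_mvt k (ga Q) (gb Q) (init1 i) eps Ha Hb He) as [c [Hc ->]].
  replace (gain_rate k (ga Q) (gb Q) (init1 i) c * eps / eps)
    with (gain_rate k (ga Q) (gb Q) (init1 i) c) by (field; lra).
  pose proof (gain_rate_lower k _ _ _ c Ha Hb (init1_range i) (proj1 Hc)).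
  assert (ga Q * c <= ga Q * eps) by (apply Rmult_le_compat_l; lra).
  assert (ga Q * eps + eps < 4 * eta).
  { replace (4 * eta) with (4 * eta / (ga Q + 1) * (ga Q + 1)) by (field; lra).
    replace (ga Q * eps + eps) with (eps * (ga Q + 1)) by ring.
    apply Rmult_lt_compat_r; lra. }
  lra.
Qed.

Lemma not_strong_equilibrium_identity k : 0 < k ->
  ~ strong_equilibrium delta (g1 k) g2 (mkGen 0 0).
Proof.
  intros Hk [_ Hstrong].
  destruct (Hstrong (mkGen (2 * k) 0) S1) as [eps [He Hopt]].
  { unfold admissible_gen; simpl; lra. }
  specialize (Hopt eps (conj He (Rle_refl eps))).
  pose proof (Fc_gain k S1 (mkGen (2 * k) 0) eps He) as Hgain. cbn [ga gb init1] in Hgain.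
  destruct (gain_mvt k (2 * k) 0 1 eps ltac:(lra) ltac:(lra) He) as [c [Hc Heq]].
  pose proof (gain_rate_neg k c Hk (proj1 Hc)).
  assert (gain_rate k (2 * k) 0 1 c * eps < 0) by nra.
  lra.
Qed.

(** * Discrete time *)

Lemma exp_INR_mult n y : exp (INR n * y) = exp y ^ n.
Proof.
  induction n as [| n IH].
  - simpl. rewrite Rmult_0_l. apply exp_0.
  - rewrite S_INR, <- tech_pow_Rmult, <- IH, <- exp_plus. f_equal. ring.
Qed.

Definition grid_sum (h : R) : R := / 2 * / (1 - exp (- h)) + / 2 * / (1 - exp (- (2 * h))).

Lemma is_series_exp_geom y : 0 < y -> is_series (fun n => exp (- y) ^ n) (/ (1 - exp (- y))).
Proof.
  intros Hy. apply is_series_geom.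
  pose proof (exp_pos (- y)). pose proof (exp_opp_lt_one y Hy).
  rewrite Rabs_right; lra.
Qed.

Lemma is_series_delta_grid h : 0 < h -> is_series (fun n => delta (INR n * h)) (grid_sum h).
Proof.
  intros Hh.
  pose proof (is_series_scal (/ 2) _ _ (is_series_exp_geom h Hh)) as S1.
  pose proof (is_series_scal (/ 2) _ _ (is_series_exp_geom (2 * h) ltac:(lra))) as S2.
  eapply is_series_ext; [| exact (is_series_plus _ _ _ _ S1 S2)].
  intros n. unfold delta. rewrite <- !exp_INR_mult.
  replace (INR n * - h) with (- (INR n * h)) by ring.
  replace (INR n * - (2 * h)) with (- (2 * (INR n * h))) by ring.
  reflexivity.
Qed.

Lemma grid_sum_bounds h : 0 < h -> 0 <= grid_sum h - 1 /\ h * (grid_sum h - 1) <= 3 / 4.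
Proof.
  intros Hh. unfold grid_sum. rewrite !exp_Ropp.
  pose proof (exp_ineq1 h ltac:(lra)). pose proof (exp_ineq1 (2 * h) ltac:(lra)).
  set (e1 := exp h) in *. set (e2 := exp (2 * h)) in *.
  replace (/ 2 * / (1 - / e1) + / 2 * / (1 - / e2) - 1)
    with (/ 2 * / (e1 - 1) + / 2 * / (e2 - 1)) by (field; lra).
  assert (0 < / (e1 - 1) <= / h) as [P1 I1]
    by (split; [apply Rinv_0_lt_compat | apply Rinv_le_contravar]; lra).
  assert (0 < / (e2 - 1) <= / (2 * h)) as [P2 I2]
    by (split; [apply Rinv_0_lt_compat | apply Rinv_le_contravar]; lra).
  assert (h * / (e1 - 1) <= 1).
  { apply Rle_trans with (h * / h); [apply Rmult_le_compat_l; lra | right; field; lra]. }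
  assert (h * / (e2 - 1) <= / 2).
  { apply Rle_trans with (h * / (2 * h)); [apply Rmult_le_compat_l; lra | right; field; lra]. }
  split; lra.
Qed.

Lemma dprob1_identity p0 n : dprob1 (fun _ => mkGen 0 0) p0 n = p0.
Proof. induction n as [| n IH]; simpl; [reflexivity | rewrite IH; ring]. Qed.

Lemma dprob1_concat u p0 n :
  dprob1 (pol_concat1 u (mkGen 0 0)) p0 (S n) = p0 * (1 - ga u) + (1 - p0) * gb u.
Proof. induction n as [| n IH]; [reflexivity |]. simpl. simpl in IH. rewrite IH. ring. Qed.

Lemma dterm_identity k h i n :
  dterm delta (g1 k) g2 h (fun _ => mkGen 0 0) i n = - (init1 i * h) * delta (INR n * h).
Proof.
  unfold dterm, kappa1, kappa2. rewrite dprob1_identity. cbn [ga gb].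
  unfold Rdiv. rewrite Rmult_0_l, g1_0. unfold g2. ring.
Qed.

Lemma dterm_concat_0 k h i u :
  dterm delta (g1 k) g2 h (pol_concat1 u (mkGen 0 0)) i 0 = init1 i * g1 k (ga u / h) * h.
Proof.
  unfold dterm, kappa1, kappa2. cbn [dprob1 pol_concat1 INR].
  rewrite Rmult_0_l, delta_0. unfold g2. ring.
Qed.

Lemma dterm_concat_succ k h i u n :
  dterm delta (g1 k) g2 h (pol_concat1 u (mkGen 0 0)) i (S n) =
  - ((init1 i * (1 - ga u) + (1 - init1 i) * gb u) * h) * delta (INR (S n) * h).
Proof.
  unfold dterm, kappa1, kappa2. rewrite dprob1_concat. cbn [pol_concat1 ga gb].
  unfold Rdiv. rewrite Rmult_0_l, g1_0. unfold g2. ring.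
Qed.

Lemma Vh_eq dl f1 f2 h i pol l :
  infinite_sum (dterm dl f1 f2 h pol i) l -> Vh dl f1 f2 h i pol = l.
Proof.
  intros Hl. apply (uniqueness_sum (dterm dl f1 f2 h pol i)); [| exact Hl].
  exact (epsilon_spec (inhabits 0) (infinite_sum (dterm dl f1 f2 h pol i)) (ex_intro _ l Hl)).
Qed.

Lemma Vh_identity k h i : 0 < h ->
  Vh delta (g1 k) g2 h i (fun _ => mkGen 0 0) = - (init1 i * h) * grid_sum h.
Proof.
  intros Hh. apply Vh_eq, is_series_Reals.
  eapply is_series_ext; [| exact (is_series_scal _ _ _ (is_series_delta_grid h Hh))].
  intros n. symmetry. apply dterm_identity.
Qed.

Lemma Vh_concat k h i u : 0 < h ->
  Vh delta (g1 k) g2 h i (pol_concat1 u (mkGen 0 0)) =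
  init1 i * g1 k (ga u / h) * h
  - (init1 i * (1 - ga u) + (1 - init1 i) * gb u) * h * (grid_sum h - 1).
Proof.
  intros Hh. apply Vh_eq, is_series_Reals.
  set (p1 := init1 i * (1 - ga u) + (1 - init1 i) * gb u).
  assert (Htail : is_series (fun n => - (p1 * h) * delta (INR (S n) * h))
                            (- (p1 * h) * (grid_sum h - 1))).
  { apply (is_series_incr_1 (fun n => - (p1 * h) * delta (INR n * h))).
    replace (plus _ _) with (- (p1 * h) * grid_sum h)
      by (cbn beta; simpl INR; rewrite Rmult_0_l, delta_0;
          change (plus ?x ?y) with (x + y); ring).
    exact (is_series_scal _ _ _ (is_series_delta_grid h Hh)). }
  apply is_series_decr_1.
  rewrite dterm_concat_0.
  replace (plus _ (opp (init1 i * g1 k (ga u / h) * h))) with (- (p1 * h) * (grid_sum h - 1))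
    by (change (plus ?x ?y) with (x + y); change (opp ?x) with (- x); ring).
  eapply is_series_ext; [| exact Htail].
  intros n. symmetry. apply dterm_concat_succ.
Qed.

Lemma disc_equilibrium_identity k h : 0 < h ->
  disc_equilibrium delta (g1 k) g2 h (mkGen 0 0).
Proof.
  intros Hh. split; [unfold stochastic; simpl; lra |].
  intros u i [[Ha0 Ha1] [Hb0 Hb1]].
  rewrite Vh_identity, Vh_concat by exact Hh.
  destruct (grid_sum_bounds h Hh) as [Hpos Hbound].
  apply Rle_ge. destruct i; cbn [init1].
  - set (x := ga u / h).
    assert (Hx : ga u = x * h) by (unfold x; field; lra).
    assert (x * (h * (grid_sum h - 1)) <= x * (3 / 4))
      by (apply Rmult_le_compat_l; [apply Rdiv_le_0_compat |]; lra).
    pose proof (g1_le k x).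
    assert (h * (g1 k x + 1 + x * (h * (grid_sum h - 1))) <= 0)
      by (apply Rmult_le_0_l; lra).
    rewrite Hx. lra.
  - assert (0 <= gb u * h * (grid_sum h - 1))
      by (apply Rmult_le_pos; [apply Rmult_le_pos |]; lra).
    lra.
Qed.

Theorem mainTheorem14 (k : R) (hk : 0 < k) :
  let delta := fun t : R => / 2 * exp (- t) + / 2 * exp (- (2 * t)) in
  let g1 := fun a : R => - / 4 * a ^ 4 + k * a ^ 3 - k ^ 2 * a ^ 2 - 3 / 4 * a - 1 in
  let g2 := fun _ : R => 0 in
  let Qs := mkGen 0 0 in
  let us := mkGen 0 0 in
  weak_equilibrium delta g1 g2 Qs /\
  ~ strong_equilibrium delta g1 g2 Qs /\
  (exists h0, 0 < h0 /\ forall h, 0 < h < h0 -> disc_equilibrium delta g1 g2 h us) /\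
  (forall h, 0 < h -> mkGen ((ga us - 0) / h) ((gb us - 0) / h) = Qs).
Proof.
  cbv zeta.
  split; [exact (weak_equilibrium_identity k) |].
  split; [exact (not_strong_equilibrium_identity k hk) |].
  split.
  - exists 1. split; [lra |]. intros h [Hh _]. exact (disc_equilibrium_identity k h Hh).
  - intros h Hh. cbn [ga gb]. f_equal; field; lra.
Qed.
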